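(* Fix $k\in\mathbb{Z}_{\ge0}$. Let $\{K(\alpha)\}_{\alpha\in\mathfrak{c}\cup\{\mathfrak{c}\}}$ be a family of pairwise disjoint ubiquitously dense subsets of $[0,\infty)$, each of cardinality $\mathfrak{c}$, and for each $\alpha$ let $R(\alpha)$ be a $K(\alpha)$-gauge system on $\Omega$. Let $\mathbb{F}_{k,\alpha}=\{\tilde\Lambda^k[R(\alpha)](x,y)\mid x,y\in N(\Omega),\ x\neq y\}$. Then the set $\{1\}\cup\bigcup_{\alpha\in\mathfrak{c}\cup\{\mathfrak{c}\}}\mathbb{F}_{k,\alpha}$ is linearly independent over $\mathbb{Q}$ (i.e., every finite collection of distinct elements of it is linearly independent over $\mathbb{Q}$).
   Context: $\mathfrak{c}\cup\{\mathfrak{c}\}$ is the ordinal successor of $\mathfrak{c}$. A subset $S$ of $[0,\infty)$ is ubiquitously dense if $\operatorname{card}(U\cap S)=\operatorname{card}(S)$ for every non-empty open $U\subseteq[0,\infty)$. Fix a bijection $Q\colon\mathbb{Z}_{\ge0}\to\mathbb{Q}_{\ge0}$ with property (M): setting $\mu_m=\min Q^{-1}([m,m+1)\cap\mathbb{Q})$, we have $Q(\mu_m)=m$ and $\mu_m<\mu_{m+1}$ for all $m$. For a summable sequence $\alpha=(a_i)$ of positive reals and $B\subseteq\mathbb{Q}_{\ge0}$, $\langle\alpha,B\rangle=\sum_{i:\,Q(i)\in B}a_i$ ($=0$ if $B=\emptyset$). For $k\in\mathbb{Z}_{\ge0}$ let $F_k(n)=2^n+k$ and $\lambda^k_i=2^{-F_k(i)}$,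 $\lambda^k=(\lambda^k_i)_{i\ge0}$. $\Omega$ is a discrete space of cardinality $\mathfrak{c}$ and $N(\Omega)=\Omega^{\mathbb{Z}_{\ge0}}$ with the product topology. For $T\subseteq[0,\infty)$, a $T$-semi-metric on a set $Y$ is a symmetric map $r\colon Y\times Y\to[0,\infty)$ with $r(x,y)=0$ iff $x=y$ and $r(x,y)\in T$ for $x\ne y$; it is strongly rigid if $r(x,y)=r(u,v)\neq0$ implies $\{x,y\}=\{u,v\}$. For dense $S\subseteq[0,\infty)$, an $S$-gauge system on $\Omega$ is a sequence $(r_i)_{i\ge0}$ with each $r_i$ a strongly rigid $(S\cap(i,i+1))$-semi-metric on $\Omega$. Put $J(m,t)=[m,t)\cap\mathbb{Q}$, $\Lambda^k_m[r](a,b)=\langle\lambda^k,J(m,r(a,b))\rangle$ for $a,b\in\Omega$, and for $x=(x_i),y=(y_i)\in N(\Omega)$, $\Lambda^k[R](x,y)=\sum_{m\ge0}\Lambda^k_m[r_m](x_m,y_m)=\langle\lambda^k,\bigsqcup_{m\ge0}J(m,r_m(x_m,y_m))\rangle$. For each $n\in\mathbb{Z}_{\ge0}$ fix an injective map $f_n\colon\Omega^{n+1}\to\Omega$, and define $\Phi\colon N(\Omega)\to N(\Omega)$ by $\Phi(x)_{2n}=x_n$, $\Phi(x)_{2n+1}=f_n(x_0,\dots,x_n)$. Finally $\tilde\Lambda^k[R](x,y)=\Lambda^k[R](\Phi(x),\Phi(y))$. *)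

From HB Require Import structures.
From mathcomp Require Import all_boot all_order all_algebra.
From mathcomp Require Import all_classical all_reals all_analysis.
Set Implicit Arguments. Unset Strict Implicit. Unset Printing Implicit Defensive.
Import Order.TTheory GRing.Theory Num.Theory.
Import numFieldNormedType.Exports.
Local Open Scope classical_set_scope.
Local Open Scope ring_scope.

Section Defs.
Variable R : realType.

Definition Qenum (Q : nat -> rat) : Prop :=
  injective Q /\ (forall i, 0 <= Q i) /\ (forall q : rat, 0 <= q -> exists i, Q i = q).

Definition propM (Q : nat -> rat) : Prop :=
  exists mu : nat -> nat,
    (forall m, (m%:R <= Q (mu m) < m.+1%:R) /\
               (forall i, m%:R <= Q i < m.+1%:R -> (mu m <= i)%N)) /\
    (forall m, Q (mu m) = m%:R) /\
    (forall m, (mu m < mu m.+1)%N).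

(* <alpha, B> = sum_{i : Q i \in B} a_i  (limit of partial sums; 0 if B empty) *)
Definition pair_sum (Q : nat -> rat) (a : nat -> R) (B : set rat) : R :=
  \big[+%R/0%R]_(0 <= i <oo | `[< B (Q i) >]) a i.

Definition lam (k : nat) : nat -> R := fun i => (2%:R : R) ^- (2 ^ i + k)%N.

Definition J (m : nat) (t : R) : set rat := [set q : rat | m%:R <= ratr q :> R /\ ratr q < t].

Definition semi_metric (Y : Type) (T : set R) (r : Y -> Y -> R) : Prop :=
  (forall x y, r x y = r y x) /\
  (forall x y, r x y = 0 <-> x = y) /\
  (forall x y, x <> y -> T (r x y)).

Definition strongly_rigid (Y : Type) (r : Y -> Y -> R) : Prop :=
  forall x y u v, r x y = r u v -> r x y <> 0 -> (x = u /\ y = v) \/ (x = v /\ y = u).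

Definition gauge_system (Omega : Type) (S : set R) (rs : nat -> Omega -> Omega -> R) : Prop :=
  forall i : nat, semi_metric (S `&` `]i%:R, i.+1%:R[) (rs i) /\ strongly_rigid (rs i).

Definition ubiq_dense (S : set R) : Prop :=
  S `<=` `[0, +oo[ /\
  forall V : set R, open V -> V `&` `[0, +oo[ !=set0 ->
    ((V `&` `[0, +oo[) `&` S #= S)%card.

Definition Lambda (Omega : Type) (Q : nat -> rat) (k : nat)
    (rs : nat -> Omega -> Omega -> R) (x y : nat -> Omega) : R :=
  pair_sum Q (lam k) (\bigcup_(m in [set: nat]) J m (rs m (x m) (y m))).

Definition Phi (Omega : Type) (f : forall n : nat, ('I_n.+1 -> Omega) -> Omega)
    (x : nat -> Omega) : nat -> Omega :=
  fun j => if odd j then f j./2 (fun i : 'I_(j./2).+1 => x (nat_of_ord i)) else x j./2.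

Definition Lambda_tilde (Omega : Type) (Q : nat -> rat) (f : forall n : nat, ('I_n.+1 -> Omega) -> Omega)
    (k : nat) (rs : nat -> Omega -> Omega -> R) (x y : nat -> Omega) : R :=
  Lambda Q k rs (Phi f x) (Phi f y).

Definition Fset (Omega : Type) (Q : nat -> rat) (f : forall n : nat, ('I_n.+1 -> Omega) -> Omega)
    (k : nat) (rs : nat -> Omega -> Omega -> R) : set R :=
  [set t | exists x y : nat -> Omega, x <> y /\ t = Lambda_tilde Q f k rs x y].

Definition Q_lin_indep (X : set R) : Prop :=
  forall (s : seq R) (c : R -> rat), uniq s -> (forall x, x \in s -> X x) ->
    \sum_(x <- s) ratr (c x) * x = 0 -> forall x, x \in s -> c x = 0.

End Defs.

From mathcomp Require Import all_boot all_order all_algebra.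
From mathcomp Require Import all_classical all_reals all_analysis.
From mathcomp Require Import zify ring lra.
Import Order.TTheory GRing.Theory Num.Theory.
Import numFieldNormedType.Exports.
Local Open Scope classical_set_scope.
Local Open Scope ring_scope.

(* Every element of F_{k,a} is a pair sum <λ^k, B(t)> with
   B(t) = ⋃_m [m, t m) ∩ ℚ, where t m = (Rg a)_m(Φ(p)_m, Φ(q)_m) is either 0 or
   lies in the open block (m, m+1).  Given a rational relation
   c₀ + Σ_y c_y y = 0 between 1 and distinct such values, rewrite it as
   c₀ + Σ_i d_i λ_i = 0 with bounded "digits" d_i = Σ_y c_y [Q i ∈ B(t_y)].
   1. Gap lemma: since λ_{j+1} is tiny compared with the common denominator
      2^(2^j+k) of λ_0, ..., λ_j, the digits (which lie in (1/D)ℤ) vanish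
      eventually (a Liouville-type argument).
   2. Block argument: if infinitely often t_{y0} m is nonzero and differs from
      every other t_y m, two rationals of [m, m+1) just below and above
      t_{y0} m have digits differing by c_{y0}; so every c_y vanishes, and then
      c₀ too.  This is proved for arbitrary finite families of block functions.
   3. Gauge systems: at odd coordinates 2n+1 the threshold encodes, via the
      injective f_n, the prefixes of p and q; strong rigidity and disjointness
      of the K(a) make the thresholds of distinct values isolated as in 2.
   The corollary is then 2 applied to the thresholds provided by 3. *)

Section Weights.
Variables (R : realType) (k : nat).

Lemma lamE i : lam R k i = ((2:R) ^+ (2 ^ i + k))^-1.
Proof. by []. Qed.

Lemma lam_gt0 i : 0 < lam R k i.
Proof. by rewrite lamE invr_gt0 exprn_gt0. Qed.

Lemma lam_ge0 i : 0 <= lam R k i.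
Proof. exact: ltW (lam_gt0 i). Qed.

Lemma lam_step i : 2 * lam R k i.+1 <= lam R k i.
Proof.
rewrite !lamE.
have -> : ((2:R) ^+ (2 ^ i + k))^-1 = 2 * ((2:R) ^+ (2 ^ i + k).+1)^-1.
  by rewrite exprS invfM mulrA divff ?mul1r // pnatr_eq0.
rewrite ler_pM2l // lef_pV2 ?posrE ?exprn_gt0 // ler_eXn2l ?ltr1n //.
by rewrite expnS; have := expn_gt0 2 i; lia.
Qed.

Lemma lam_tail j n : \sum_(j <= i < n) lam R k i <= 2 * lam R k j.
Proof.
have [jn|nj] := leqP j n; last by rewrite big_geq ?(ltnW nj) // mulr_ge0 ?lam_ge0.
rewrite -(subnKC jn); move: (n - j)%N => l {n jn}; elim: l j => [|l IH] j.
  by rewrite addn0 big_geq // mulr_ge0 ?lam_ge0.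
rewrite big_ltn ?addnS ?ltnS ?leq_addr // -addSn.
apply: le_trans (lerD (lexx _) (IH j.+1)) _.
by rewrite [leRHS]mulrDl mul1r lerD2l lam_step.
Qed.

Lemma lam_scaled_int i j : (i <= j)%N -> (2:R) ^+ (2 ^ j + k) * lam R k i \is a Num.int.
Proof.
move=> ij; have le_exp : (2 ^ i + k <= 2 ^ j + k)%N by rewrite leq_add2r leq_pexp2l.
rewrite lamE -(subnK le_exp) exprD -mulrA divff ?mulr1 ?expf_neq0 ?pnatr_eq0 //.
by rewrite -natrX intr_nat // natr_nat.
Qed.

Lemma lam_scaled_next j : (2:R) ^+ (2 ^ j + k) * lam R k j.+1 = ((2:R) ^+ (2 ^ j))^-1.
Proof.
rewrite lamE; have -> : (2 ^ j.+1 + k = 2 ^ j + (2 ^ j + k))%N by rewrite expnS; lia.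
by rewrite [X in _ / X]exprD invfM mulrCA divff ?mulr1 // expf_neq0 // pnatr_eq0.
Qed.

End Weights.

(* If c₁ + lim G = 0 with c₁ ∈ (1/D)ℤ, then d is eventually 0:
   multiplying c₁ + G (j+1) by D·2^(2^j+k) gives an integer which, by the tail
   estimate, has absolute value < 1 once j is large. *)
Section Gap.
Variables (R : realType) (k : nat) (d : nat -> R) (B : R).
Hypothesis d_bounded : forall i, `|d i| <= B.

Let G n := \sum_(0 <= i < n) d i * lam R k i.
Let B_ge0 : 0 <= B := le_trans (normr_ge0 _) (d_bounded 0%N).

Lemma partial_sum_tail j n : (j <= n)%N -> `|G n - G j| <= 2 * B * lam R k j.
Proof.
move=> jn; rewrite /G (big_cat_nat (leq0n j) jn) /= addrC addrK.
apply: le_trans (ler_norm_sum _ _ _) _.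
apply: (@le_trans _ _ (\sum_(j <= i < n) B * lam R k i)).
  apply: ler_sum => i _; rewrite normrM (gtr0_norm (lam_gt0 R k i)).
  by rewrite ler_wpM2r // lam_ge0.
by rewrite -mulr_sumr [2 * B]mulrC -mulrA ler_wpM2l // lam_tail.
Qed.

Lemma limit_tail : cvgn G -> forall j, `|G j - limn G| <= 2 * B * lam R k j.
Proof.
move=> G_cvg j; rewrite distrC ler_distl.
have near_j : \forall n \near \oo, `|G n - G j| <= 2 * B * lam R k j.
  by near=> n; apply: partial_sum_tail; near: n; exact: nbhs_infty_ge.
apply/andP; split; [apply: limr_ge | apply: limr_le] => //;
  by apply: filterS near_j => n; rewrite ler_distl => /andP[].
Unshelve. all: by end_near.
Qed.

Lemma partial_sums_vanish (c1 D : R) :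
  0 < D -> D * c1 \is a Num.int -> (forall i, D * d i \is a Num.int) ->
  cvgn G -> c1 + limn G = 0 -> exists N, forall j, (N <= j)%N -> c1 + G j.+1 = 0.
Proof.
move=> D_gt0 Dc1_int Dd_int G_cvg c1_lim.
have [N N_large] : exists N : nat, 2 * B * D < N%:R.
  exists (Num.Def.archi_bound (2 * B * D)); apply: archi_boundP.
  by rewrite !mulr_ge0 // ltW.
exists N => j Nj; set M := (2:R) ^+ (2 ^ j + k).
have DM_gt0 : 0 < D * M by rewrite mulr_gt0 // exprn_gt0.
have scaled_int : D * M * (c1 + G j.+1) \is a Num.int.
  rewrite mulrDr rpredD //; first by rewrite mulrAC rpredM // /M -natrX intr_nat // natr_nat.
  rewrite /G big_mkord mulr_sumr rpred_sum // => i _.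
  by rewrite mulrACA rpredM // lam_scaled_int // -ltnS ltn_ord.
have scaled_small : `|D * M * (c1 + G j.+1)| < 1.
  have -> : c1 + G j.+1 = G j.+1 - limn G by move: c1_lim; lra.
  rewrite normrM (gtr0_norm DM_gt0).
  apply: le_lt_trans (ler_wpM2l (ltW DM_gt0) (limit_tail G_cvg j.+1)) _.
  have -> : D * M * (2 * B * lam R k j.+1) = 2 * B * D * (M * lam R k j.+1) by ring.
  rewrite lam_scaled_next ltr_pdivrMr ?exprn_gt0 // mul1r (lt_le_trans N_large) //.
  rewrite -natrX ler_nat (leq_trans Nj) // ltnW // (ltn_trans (ltn_expl j (ltnSn 1))) //.
  exact: ltn_expl.
apply/eqP; apply: contraTT scaled_small => /(mulf_neq0 (lt0r_neq0 DM_gt0)) nz.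
by rewrite -leNgt norm_intr_ge1.
Qed.

Lemma gap_lemma (c1 D : R) :
  0 < D -> D * c1 \is a Num.int -> (forall i, D * d i \is a Num.int) ->
  cvgn G -> c1 + limn G = 0 -> exists N, forall j, (N <= j)%N -> d j = 0.
Proof.
move=> D_gt0 Dc1_int Dd_int G_cvg c1_lim.
have [N vanish] := partial_sums_vanish _ _ D_gt0 Dc1_int Dd_int G_cvg c1_lim.
exists N.+1 => j Nj; have j_gt0 : (0 < j)%N by apply: leq_trans Nj.
have prev : c1 + G j = 0 by rewrite -(prednK j_gt0) vanish // -ltnS prednK.
have step : G j.+1 = G j + d j * lam R k j by rewrite /G big_nat_recr.
have : d j * lam R k j = 0 by move: (vanish j (ltnW Nj)) prev step; lra.
by move/eqP; rewrite mulf_eq0 (gt_eqF (lam_gt0 R k j)) orbF => /eqP.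
Qed.

End Gap.

Lemma finite_bounded {R : realType} (u : nat -> R) N :
  exists m0 : nat, forall i, (i < N)%N -> u i < m0%:R.
Proof.
elim: N => [|N [m0 u_lt]]; first by exists 0%N.
exists (maxn m0 (Num.Def.archi_bound `|u N|)) => i; rewrite ltnS leq_eqVlt.
case/orP=> [/eqP->|iN]; last by rewrite (lt_le_trans (u_lt i iN)) // ler_nat leq_maxl.
rewrite (le_lt_trans (ler_norm _)) // (lt_le_trans (archi_boundP (normr_ge0 _))) //.
by rewrite ler_nat leq_maxr.
Qed.

Lemma finite_avoid {R : realType} (xs : seq R) (tau : R) :
  tau \notin xs -> exists2 del, 0 < del & forall x, x \in xs -> del <= `|x - tau|.
Proof.
elim: xs => [|x xs IH]; first by exists 1.
rewrite in_cons negb_or => /andP[tau_x /IH[del del_gt0 del_le]].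
exists (Num.min del `|x - tau|); first by rewrite lt_min del_gt0 normr_gt0 subr_eq0 eq_sym.
by move=> z; rewrite in_cons ge_min => /orP[/eqP->|/del_le->]; rewrite ?lexx ?orbT.
Qed.

Lemma separating_rationals {R : realType} {m : nat} {tau : R} {xs : seq R} :
  m%:R < tau < m.+1%:R -> tau \notin xs ->
  exists q1 q2 : rat, [/\ (m%:R : R) <= ratr q1 < tau, tau < ratr q2 < (m.+1%:R : R)
                        & forall x, x \in xs -> (ratr q1 < x) = (ratr q2 < x)].
Proof.
move=> /andP[m_tau tau_m] /finite_avoid[del del_gt0 del_le].
have lo : Num.max (m%:R : R) (tau - del) < tau by rewrite gt_max m_tau gtrDl oppr_lt0.
have hi : tau < Num.min (m.+1%:R : R) (tau + del) by rewrite lt_min tau_m ltrDl.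
have [q1] := rat_in_itvoo lo; rewrite in_itv /= gt_max => /andP[/andP[mq1 q1_lo] q1_tau].
have [q2] := rat_in_itvoo hi; rewrite in_itv /= lt_min => /andP[tau_q2 /andP[q2_m q2_hi]].
exists q1, q2; split; rewrite ?(ltW mq1) ?q1_tau ?tau_q2 ?q2_m // => x /del_le x_far.
move: x_far; rewrite ler_normr => /orP[] x_far.
  have [q1_x q2_x] : ratr q1 < x /\ ratr q2 < x by split; lra.
  by rewrite q1_x q2_x.
have [q1_x q2_x] : x <= ratr q1 /\ x <= ratr q2 by split; lra.
by rewrite !ltNge q1_x q2_x.
Qed.

Lemma eventually_all {T : eqType} {r : seq T} {P : T -> nat -> Prop} :
  (forall y, y \in r -> exists N, forall n, (N <= n)%N -> P y n) ->
  exists N, forall n, (N <= n)%N -> forall y, y \in r -> P y n.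
Proof.
elim: r => [|z r IH] ev; first by exists 0%N.
have [N1 ev_z] := ev z (mem_head _ _).
have [|N2 ev_r] := IH; first by move=> y y_r; apply: ev; rewrite in_cons y_r orbT.
exists (maxn N1 N2) => n; rewrite geq_max => /andP[N1n N2n] y.
by rewrite in_cons => /orP[/eqP->|/ev_r]; [exact: ev_z | exact].
Qed.

Definition Bset {R : realType} (t : nat -> R) : set rat := \bigcup_(m in setT) J m (t m).

Definition block_fun {R : realType} (t : nat -> R) : Prop :=
  forall m, t m = 0 \/ m%:R < t m < m.+1%:R.

Lemma Bset_block {R : realType} {t : nat -> R} (m : nat) {q : rat} :
  block_fun t -> (m%:R : R) <= ratr q < (m.+1%:R : R) -> `[< Bset t q >] = (ratr q < t m).
Proof.
move=> t_block /andP[m_q q_m]; apply/asboolP/idP => [[m' _ [m'_q q_t]]|q_t]; last by exists m.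
have [t0|/andP[m'_t t_m']] := t_block m'.
  by move: (le_lt_trans m'_q q_t); rewrite t0 ltNge ler0n.
have m_m' : (m < m'.+1)%N by rewrite -(ltr_nat R) (le_lt_trans m_q (lt_trans q_t t_m')).
have m'_m : (m' < m.+1)%N by rewrite -(ltr_nat R) (le_lt_trans m'_q q_m).
by have -> : m = m' by lia.
Qed.

(* The pair sum <λ^k, B> is the limit of its (monotone, bounded) partial sums. *)
Lemma pair_sum_cvg {R : realType} (Q : nat -> rat) (k : nat) (B : set rat) :
  cvgn (fun n => \sum_(0 <= i < n | `[< B (Q i) >]) lam R k i).
Proof.
apply: cvgP; apply: nondecreasing_cvgn.
  move=> n m nm /=; rewrite (big_cat_nat (leq0n n) nm) //= lerDl.
  by apply: sumr_ge0 => i _; exact: lam_ge0.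
exists (2 * lam R k 0) => _ [n _ <-]; apply: le_trans (lam_tail R k 0 n).
by rewrite [leLHS]big_mkcond /= ler_sum // => i _; case: ifP => // _; exact: lam_ge0.
Qed.

Lemma common_denom_int (F : archiFieldType) (s : seq rat) (x : rat) : x \in s ->
  ((\prod_(y <- s) denq y)%:~R : F) * ratr x \is a Num.int.
Proof.
move=> x_s; rewrite (big_rem x x_s) /= rmorphM /= mulrAC.
have -> : ((denq x)%:~R : F) * ratr x = (numq x)%:~R.
  by rewrite -[in RHS](rmorph_int (@ratr F)) numqE rmorphM /= rmorph_int mulrC.
by rewrite -rmorphM /= intr_int.
Qed.

Section Digits.
Variables (R : realType) (Q : nat -> rat) (k : nat).
Variables (T : eqType) (ys : seq T) (t : T -> nat -> R) (c : T -> rat).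

Definition digit (j : nat) : R :=
  \sum_(y <- ys) ratr (c y) * (`[< Bset (t y) (Q j) >])%:R.

Definition isolated_often (y0 : T) : Prop :=
  forall M, exists m, [/\ (M <= m)%N, t y0 m != 0 &
                          forall y, y \in ys -> y != y0 -> t y m != t y0 m].

Lemma digit_series :
  \sum_(0 <= i < n) digit i * lam R k i @[n --> \oo] -->
  \sum_(y <- ys) ratr (c y) * pair_sum Q (lam R k) (Bset (t y)).
Proof.
have -> : (fun n => \sum_(0 <= i < n) digit i * lam R k i) = (fun n =>
    \sum_(y <- ys) ratr (c y) * \sum_(0 <= i < n | `[< Bset (t y) (Q i) >]) lam R k i).
  apply/funext => n; under eq_bigr do rewrite mulr_suml.
  rewrite exchange_big /=; apply: eq_bigr => y _.
  rewrite mulr_sumr [in RHS]big_mkcond /=; apply: eq_bigr => i _.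
  by case: asboolP => _; rewrite ?mulr1 ?mulr0 ?mul0r.
apply: (@cvg_big _ _ +%R 0 xpredT add_continuous) => y _.
by apply: cvgM; [exact: cvg_cst | exact: pair_sum_cvg].
Qed.

Lemma digit_bounded j : `|digit j| <= \sum_(y <- ys) `|ratr (c y) : R|.
Proof.
apply: le_trans (ler_norm_sum _ _ _) _; apply: ler_sum => y _; rewrite normrM.
by case: (`[< _ >]); rewrite ?normr1 ?mulr1 ?normr0 ?mulr0.
Qed.

Lemma digit_int (D : R) : (forall y, y \in ys -> D * ratr (c y) \is a Num.int) ->
  forall j, D * digit j \is a Num.int.
Proof.
move=> Dc_int j; rewrite mulr_sumr big_seq rpred_sum // => y y_ys.
by rewrite mulrA rpredM ?Dc_int // intr_nat // natr_nat.
Qed.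

Lemma digit_jump (y0 : T) (m i1 i2 : nat) :
  uniq ys -> y0 \in ys -> (forall y, y \in ys -> block_fun (t y)) ->
  (m%:R : R) <= ratr (Q i1) < (m.+1%:R : R) -> (m%:R : R) <= ratr (Q i2) < (m.+1%:R : R) ->
  ratr (Q i1) < t y0 m <= ratr (Q i2) ->
  (forall y, y \in ys -> y != y0 -> (ratr (Q i1) < t y m) = (ratr (Q i2) < t y m)) ->
  digit i1 - digit i2 = ratr (c y0).
Proof.
move=> uniq_ys y0_ys blocks Qi1_m Qi2_m /andP[below above] unseparated.
have indicator y i : y \in ys -> (m%:R : R) <= ratr (Q i) < (m.+1%:R : R) ->
    `[< Bset (t y) (Q i) >] = (ratr (Q i) < t y m).
  by move=> y_ys /(Bset_block m (blocks y y_ys)).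
rewrite /digit -sumrB (bigD1_seq y0) //= big1_seq => [|y /andP[y_y0 y_ys]].
  by rewrite addr0 -mulrBr !indicator // below ltNge above subr0 mulr1.
by rewrite -mulrBr !indicator // unseparated // subrr mulr0.
Qed.

(* A nonzero coefficient of an infinitely often isolated member produces nonzero
   digits arbitrarily far out: Q enumerates the rationals of the blocks. *)
Lemma digit_often_nonzero (y0 : T) :
  (forall q : rat, 0 <= q -> exists i, Q i = q) -> uniq ys -> y0 \in ys ->
  (forall y, y \in ys -> block_fun (t y)) -> isolated_often y0 -> c y0 != 0 ->
  forall N, exists2 j, (N <= j)%N & digit j != 0.
Proof.
move=> Q_onto uniq_ys y0_ys blocks isolated cy0_nz N.
have [m0 early_small] := finite_bounded (fun i => ratr (Q i) : R) N.
have [m [m0_m ty0_nz ty0_alone]] := isolated m0.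
have [ty0_0|ty0_in] := blocks y0 y0_ys m; first by rewrite ty0_0 eqxx in ty0_nz.
have /andP[m_tau tau_m] := ty0_in.
have tau_alone : t y0 m \notin [seq t y m | y <- ys & y != y0].
  apply/mapP => -[y]; rewrite mem_filter => /andP[y_y0 y_ys] /esym/eqP.
  by rewrite (negbTE (ty0_alone y y_ys y_y0)).
have [q1 [q2 [/andP[m_q1 q1_tau] /andP[tau_q2 q2_m] unseparated]]] :=
  separating_rationals ty0_in tau_alone.
have m_q2 : (m%:R : R) <= ratr q2 by rewrite ltW // (lt_trans m_tau).
have [i1 Qi1] : exists i1, Q i1 = q1.
  by apply: Q_onto; rewrite -(ler0q R) (le_trans _ m_q1).
have [i2 Qi2] : exists i2, Q i2 = q2.
  by apply: Q_onto; rewrite -(ler0q R) (le_trans _ m_q2).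
have late i : (m%:R : R) <= ratr (Q i) -> (N <= i)%N.
  move=> m_Qi; rewrite leqNgt; apply/negP => /early_small.
  by rewrite ltNge (le_trans _ m_Qi) // ler_nat.
have jump : digit i1 - digit i2 = ratr (c y0).
  apply: (digit_jump _ m) => //; rewrite ?Qi1 ?Qi2.
  - by rewrite m_q1 (lt_trans q1_tau).
  - by rewrite m_q2.
  - by rewrite q1_tau ltW.
  - move=> y y_ys y_y0; apply: unseparated; apply/mapP; exists y => //.
    by rewrite mem_filter y_y0.
have [d1_0|d1_nz] := eqVneq (digit i1) 0; last by exists i1; rewrite // late ?Qi1.
exists i2; first by rewrite late ?Qi2.
apply: contra_neq cy0_nz => d2_0.
have : ratr (c y0) = 0 :> R by rewrite -jump d1_0 d2_0 subrr.
by move/eqP; rewrite fmorph_eq0 => /eqP.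
Qed.

Theorem threshold_relation_trivial (c0 : rat) :
  (forall q : rat, 0 <= q -> exists i, Q i = q) -> uniq ys ->
  (forall y, y \in ys -> block_fun (t y)) -> (forall y, y \in ys -> isolated_often y) ->
  ratr c0 + \sum_(y <- ys) ratr (c y) * pair_sum Q (lam R k) (Bset (t y)) = 0 ->
  c0 = 0 /\ forall y, y \in ys -> c y = 0.
Proof.
move=> Q_onto uniq_ys blocks isolated relation.
set D : R := (\prod_(x <- c0 :: map c ys) denq x)%:~R.
have D_gt0 : 0 < D by rewrite ltr0z prodr_gt0 // => x _; exact: denq_gt0.
have Dc0_int : D * ratr c0 \is a Num.int by rewrite common_denom_int ?mem_head.
have Dd_int : forall j, D * digit j \is a Num.int.
  by apply: digit_int => y y_ys; rewrite common_denom_int // in_cons map_f ?orbT.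
have series_rel : ratr c0 + limn (fun n => \sum_(0 <= i < n) digit i * lam R k i) = 0.
  by rewrite (cvg_lim (@Rhausdorff R) digit_series).
have [N digits_vanish] := @gap_lemma R k digit _ digit_bounded _ _ D_gt0 Dc0_int Dd_int
  (cvgP _ digit_series) series_rel.
have c_zero y : y \in ys -> c y = 0.
  move=> y_ys; apply/eqP; apply: contraT => cy_nz.
  have [j Nj] := digit_often_nonzero y Q_onto uniq_ys y_ys blocks (isolated y y_ys) cy_nz N.
  by rewrite digits_vanish ?eqxx.
split=> //; move: relation; rewrite big_seq big1 => [|y y_ys]; last first.
  by rewrite c_zero // rmorph0 mul0r.
by rewrite addr0 => /eqP; rewrite fmorph_eq0 => /eqP.
Qed.

End Digits.

Arguments isolated_often {R T}.
Arguments threshold_relation_trivial {R Q k T ys t c c0}.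

(* At an odd coordinate 2n+1 this threshold
   encodes, through the injective f_n, the whole prefixes p_0..p_n and
   q_0..q_n; with strong rigidity and the disjointness of the K(a) this makes
   the thresholds of two different representations differ eventually. *)
Section Gauge.
Variables (R : realType) (Omega I : Type) (f : forall n : nat, ('I_n.+1 -> Omega) -> Omega).
Variables (K : I -> set R) (Rg : I -> nat -> Omega -> Omega -> R).
Hypothesis f_inj : forall n, injective (f n).
Hypothesis K_disj : forall a b, a <> b -> K a `&` K b = set0.
Hypothesis Rg_gauge : forall a, gauge_system (K a) (Rg a).

Definition gauge_thr (a : I) (p q : nat -> Omega) (m : nat) : R :=
  Rg a m (Phi f p m) (Phi f q m).

Definition gauge_rep (Q : nat -> rat) (k : nat) (y : R) (t : nat -> R) : Prop :=
  exists a p q, [/\ p <> q, y = Lambda_tilde Q f k (Rg a) p q & t = gauge_thr a p q].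

Lemma Phi_odd (x : nat -> Omega) n : Phi f x n.*2.+1 = f n (fun i : 'I_n.+1 => x i).
Proof.
rewrite /Phi /= odd_double /=.
have e : uphalf n.*2 = n by rewrite uphalf_double.
by move: (uphalf n.*2) e => j ->.
Qed.

Lemma gauge_rep_block Q k y t : gauge_rep Q k y t -> block_fun t.
Proof.
move=> [a [p [q [_ _ ->]]]] m; have [[_ [r0 r_range]] _] := Rg_gauge a m.
have [pq|pq] := pselect (Phi f p m = Phi f q m); first by left; apply/r0.
by right; have [_] := r_range _ _ pq; rewrite /= in_itv.
Qed.

Lemma gauge_thr_in_K a p q m : gauge_thr a p q m != 0 -> K a (gauge_thr a p q m).
Proof.
have [[_ [r0 r_range]] _] := Rg_gauge a m.
have [pq|pq] := pselect (Phi f p m = Phi f q m); last by case: (r_range _ _ pq).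
by rewrite /gauge_thr pq (proj2 (r0 _ _) erefl) eqxx.
Qed.

Lemma gauge_thr_odd_nonzero a p q i n :
  (i <= n)%N -> p i <> q i -> gauge_thr a p q n.*2.+1 != 0.
Proof.
move=> i_n p_q; apply/eqP; rewrite /gauge_thr !Phi_odd.
have [[_ [r0 _]] _] := Rg_gauge a n.*2.+1.
move/r0/f_inj/(congr1 (fun g => g (Ordinal (i_n : (i < n.+1)%N)))).
exact: p_q.
Qed.

Lemma Lambda_tilde_sym Q k a p q :
  Lambda_tilde Q f k (Rg a) p q = Lambda_tilde Q f k (Rg a) q p.
Proof.
rewrite /Lambda_tilde /Lambda; congr pair_sum; apply/seteqP.
by split=> r [m _ r_J]; exists m => //; have [[<- _] _] := Rg_gauge a m.
Qed.

(* By strong rigidity, two equal nonzero thresholds at 2n+1 for the same gauge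
   system come from the same prefixes up to n, possibly swapped. *)
Lemma gauge_thr_odd_eq {a p q p0 q0 n} :
  gauge_thr a p0 q0 n.*2.+1 != 0 -> gauge_thr a p q n.*2.+1 = gauge_thr a p0 q0 n.*2.+1 ->
  (forall i, (i <= n)%N -> p i = p0 i /\ q i = q0 i) \/
  (forall i, (i <= n)%N -> p i = q0 i /\ q i = p0 i).
Proof.
move=> nz same; have [_ rigid] := Rg_gauge a n.*2.+1.
have nz' : gauge_thr a p q n.*2.+1 <> 0 by rewrite same; exact/eqP.
have prefix (x y : nat -> Omega) : f n (fun i : 'I_n.+1 => x i) = f n (fun i => y i) ->
    forall i, (i <= n)%N -> x i = y i.
  by move/f_inj => xy i i_n; exact: (congr1 (fun g => g (Ordinal (i_n : (i < n.+1)%N))) xy).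
move: (rigid _ _ _ _ same nz'); rewrite !Phi_odd => -[[e1 e2]|[e1 e2]]; [left | right];
  by move=> i i_n; rewrite (prefix _ _ e1 i i_n) (prefix _ _ e2 i i_n).
Qed.

Lemma gauge_thr_separate a0 a p0 q0 p q :
  ~ (a = a0 /\ ((p = p0 /\ q = q0) \/ (p = q0 /\ q = p0))) ->
  exists N, forall n, (N <= n)%N -> gauge_thr a0 p0 q0 n.*2.+1 != 0 ->
    gauge_thr a p q n.*2.+1 != gauge_thr a0 p0 q0 n.*2.+1.
Proof.
move=> different; apply: contrapT => not_eventually.
have often N : exists n, [/\ (N <= n)%N, gauge_thr a0 p0 q0 n.*2.+1 != 0 &
    gauge_thr a p q n.*2.+1 = gauge_thr a0 p0 q0 n.*2.+1].
  apply: contrapT => never; apply: not_eventually; exists N => n N_n nz.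
  by apply/eqP => same; apply: never; exists n.
have a_a0 : a = a0.
  have [n [_ nz same]] := often 0%N; apply: contrapT => /K_disj disj.
  have : (K a `&` K a0) (gauge_thr a0 p0 q0 n.*2.+1).
    split; last exact: gauge_thr_in_K.
    by rewrite -same; apply: gauge_thr_in_K; rewrite same.
  by rewrite disj.
subst a0.
have [i1 mismatch1] : exists i, ~ (p i = p0 i /\ q i = q0 i).
  apply/existsNP => agree; apply: different; split=> //; left.
  by split; apply/funext => i; case: (agree i).
have [i2 mismatch2] : exists i, ~ (p i = q0 i /\ q i = p0 i).
  apply/existsNP => agree; apply: different; split=> //; right.
  by split; apply/funext => i; case: (agree i).
have [n [i_n nz same]] := often (maxn i1 i2).
rewrite geq_max in i_n; case/andP: i_n => i1_n i2_n.
by case: (gauge_thr_odd_eq nz same) => agree;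
  [apply: mismatch1; exact: agree | apply: mismatch2; exact: agree].
Qed.

Lemma gauge_representation Q k (ys : seq R) :
  (forall y, y \in ys -> (\bigcup_(a in [set: I]) Fset Q f k (Rg a)) y) ->
  exists t : R -> nat -> R, forall y, y \in ys -> gauge_rep Q k y (t y).
Proof.
move=> ys_F; suff /choice[t t_rep] : forall y, exists t, y \in ys -> gauge_rep Q k y t.
  by exists t.
move=> y; have [y_ys|] := boolP (y \in ys); last by exists (fun _ => 0).
have [a _ [p [q [p_q y_val]]]] := ys_F y y_ys.
by exists (gauge_thr a p q) => _; exists a, p, q.
Qed.

(* The thresholds of distinct values are isolated infinitely often, namely at
   all large odd coordinates. *)
Lemma gauge_isolated Q k (ys : seq R) (t : R -> nat -> R) :
  (forall y, y \in ys -> gauge_rep Q k y (t y)) ->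
  forall y0, y0 \in ys -> isolated_often ys t y0.
Proof.
move=> rep y0 y0_ys; have [a0 [p0 [q0 [p0_q0 y0_val t_y0]]]] := rep y0 y0_ys.
have [i0 p0_q0_i0] : exists i0, p0 i0 <> q0 i0.
  by apply/existsNP => agree; apply: p0_q0; apply/funext.
have separated y : y \in ys -> exists N, forall n, (N <= n)%N -> y != y0 ->
    t y0 n.*2.+1 != 0 -> t y n.*2.+1 != t y0 n.*2.+1.
  move=> y_ys; have [<-|y_y0] := eqVneq y0 y; first by exists 0%N => n _; rewrite eqxx.
  have [a [p [q [_ y_val t_y]]]] := rep y y_ys.
  have [|N sep] := gauge_thr_separate a0 a p0 q0 p q; last first.
    by exists N => n N_n _; rewrite t_y t_y0; exact: sep.
  move=> [a_a0 [[p_p0 q_q0]|[p_q0 q_p0]]]; move/eqP: y_y0; apply.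
    by rewrite y_val y0_val a_a0 p_p0 q_q0.
  by rewrite y_val y0_val a_a0 p_q0 q_p0 Lambda_tilde_sym.
have [N sep] := eventually_all (P := fun y n => y != y0 ->
  t y0 n.*2.+1 != 0 -> t y n.*2.+1 != t y0 n.*2.+1) separated.
have nz n : (i0 <= n)%N -> t y0 n.*2.+1 != 0.
  by move=> i0_n; rewrite t_y0; exact: gauge_thr_odd_nonzero i0_n p0_q0_i0.
move=> M; set n := maxn M (maxn N i0).
have [M_n N_n i0_n] : [/\ (M <= n)%N, (N <= n)%N & (i0 <= n)%N] by split; lia.
exists n.*2.+1; split; first by lia.
  exact: nz.
by move=> y y_ys y_y0; exact: sep n N_n y y_ys y_y0 (nz n i0_n).
Qed.

End Gauge.

Arguments gauge_representation {R Omega I f Rg Q k ys}.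
Arguments gauge_rep_block {R Omega I f K Rg} Rg_gauge {Q k y t}.
Arguments gauge_isolated {R Omega I f K Rg} f_inj K_disj Rg_gauge {Q k ys t}.

Lemma sum_split_one {R : realType} (s : seq R) (c : R -> rat) : uniq s ->
  \sum_(x <- s) ratr (c x) * x =
  ratr (if 1 \in s then c 1 else 0) + \sum_(y <- [seq y <- s | y != 1]) ratr (c y) * y.
Proof.
move=> uniq_s; rewrite (bigID (fun x => x == 1)) /= big_filter; congr (_ + _).
case: ifP => one_s; last first.
  by rewrite rmorph0 big1_seq // => x /andP[/eqP-> x_s]; rewrite x_s in one_s.
rewrite -big_filter (_ : [seq x <- s | x == 1] = [:: 1]) ?big_seq1 ?mulr1 //.
by rewrite -(filter_pred1_uniq uniq_s one_s); apply: eq_filter.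
Qed.

Theorem corollary4p25 (R : realType) (Omega : Type) (I : Type)
    (Q : nat -> rat) (f : forall n : nat, ('I_n.+1 -> Omega) -> Omega) (k : nat)
    (K : I -> set R) (Rg : I -> nat -> Omega -> Omega -> R) :
  ([set: Omega] #= [set: R])%card ->
  ([set: I] #= [set: R])%card ->
  Qenum Q -> propM Q ->
  (forall n, injective (f n)) ->
  (forall a b, a <> b -> K a `&` K b = set0) ->
  (forall a, ubiq_dense (K a)) ->
  (forall a, (K a #= [set: R])%card) ->
  (forall a, gauge_system (K a) (Rg a)) ->
  Q_lin_indep ([set 1] `|` \bigcup_(a in [set: I]) Fset Q f k (Rg a)).
Proof.
move=> _ _ [_ [_ Q_onto]] _ f_inj K_disj _ _ Rg_gauge s c uniq_s s_sub relation x x_s.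
set ys := [seq y <- s | y != 1].
have ys_F y : y \in ys -> (\bigcup_(a in [set: I]) Fset Q f k (Rg a)) y.
  by rewrite mem_filter => /andP[y_1 /s_sub[/= y_eq1|//]]; rewrite y_eq1 eqxx in y_1.
have [t t_rep] := gauge_representation ys_F.
have relation' : ratr (if 1 \in s then c 1 else 0) +
    \sum_(y <- ys) ratr (c y) * pair_sum Q (lam R k) (Bset (t y)) = 0.
  rewrite -[in RHS]relation sum_split_one //; congr (_ + _).
  apply: eq_big_seq => y y_ys; congr (_ * _).
  by have [a [p [q [_ y_val ->]]]] := t_rep y y_ys; rewrite y_val.
have [c1_0 c_ys_0] := threshold_relation_trivial Q_onto (filter_uniq _ uniq_s)
  (fun y y_ys => gauge_rep_block Rg_gauge (t_rep y y_ys))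
  (gauge_isolated f_inj K_disj Rg_gauge t_rep) relation'.
have [x_1|x_1] := eqVneq x 1; first by subst x; rewrite x_s in c1_0.
by apply: c_ys_0; rewrite mem_filter x_1.
Qed.
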